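(* Let $A \in \mathbb{R}^{m \times r}$ and $C = \{ x \in \mathbb{R}^r \mid Ax \ge 0\}$. Then $C$ has only finitely many conformally non-decomposable vectors up to positive scalar multiples.
   Context: For $x \in \mathbb{R}^n$, $\operatorname{sign}(x) \in \{-,0,+\}^n$ is obtained by applying the sign function componentwise; the relations $0<-$, $0<+$ induce a componentwise partial order on $\{-,0,+\}^n$. A nonzero $x \in C$ is conformally non-decomposable if for all nonzero $x^1,x^2 \in C$ with $\operatorname{sign}(x^1),\operatorname{sign}(x^2) \le \operatorname{sign}(x)$, $x = x^1 + x^2$ implies $x^1 = \lambda x^2$ for some $\lambda > 0$. *)

From HB Require Import structures.
From mathcomp Require Import all_boot all_order all_algebra.
From mathcomp Require Import reals.
Set Implicit Arguments. Unset Strict Implicit. Unset Printing Implicit Defensive.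
Import Order.TTheory GRing.Theory Num.Theory.
Local Open Scope ring_scope.

Definition in_cone (R : realType) (m r : nat) (A : 'M[R]_(m, r)) (x : 'cV[R]_r) : Prop :=
  forall i : 'I_m, 0 <= (A *m x) i ord0.

(* sign(x) <= sign(y) in {-,0,+}^r with 0 < -, 0 < + componentwise:
   each component of sign(x) is 0 or equals the corresponding one of sign(y). *)
Definition sign_le (R : realType) (r : nat) (x y : 'cV[R]_r) : Prop :=
  forall i : 'I_r, Num.sg (x i ord0) = 0 \/ Num.sg (x i ord0) = Num.sg (y i ord0).

Definition conf_nondec (R : realType) (m r : nat) (A : 'M[R]_(m, r)) (x : 'cV[R]_r) : Prop :=
  in_cone A x /\ x <> 0 /\
  forall x1 x2 : 'cV[R]_r,
    in_cone A x1 -> in_cone A x2 -> x1 <> 0 -> x2 <> 0 ->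
    sign_le x1 x -> sign_le x2 x -> x = x1 + x2 ->
    exists lambda : R, 0 < lambda /\ x1 = lambda *: x2.

(* Two conformally non-decomposable vectors x, y of C with the same sign
   vector, and such that Ax and Ay have the same sign vector, are positive
   multiples of each other: for small t > 0 both t y and x - t y lie in C and
   are conformal to x, so non-decomposability makes x - t y a nonnegative
   multiple of y.  Finitely many sign patterns give finitely many classes. *)
From HB Require Import structures.
From mathcomp Require Import all_boot all_order all_algebra.
From mathcomp Require Import reals.
From mathcomp Require Import ring.
From Stdlib Require Import Classical.
Set Implicit Arguments. Unset Strict Implicit. Unset Printing Implicit Defensive.
Import Order.TTheory GRing.Theory Num.Theory.
Local Open Scope ring_scope.

Lemma exists_transversal_of_finite_key (T : eqType) (K : finType)
    (P : T -> Prop) (key : T -> K) (rel : T -> T -> Prop) :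
  (forall x y, P x -> P y -> key x = key y -> rel x y) ->
  exists s : seq T, forall x, P x -> exists2 y, y \in s & rel x y.
Proof.
move=> key_rel.
have: forall k : K, exists l : seq T,
    forall x, P x -> key x = k -> exists2 y, y \in l & rel x y.
  move=> k; case: (classic (exists2 x, P x & key x = k)) => [[x0 Px0 <-]|nx].
    by exists [:: x0] => x Px kx; exists x0; [rewrite mem_seq1 | exact: key_rel].
  by exists [::] => x Px kx; case: nx; exists x.
case/fin_all_exists => l hl; exists (flatten [seq l k | k <- enum K]) => x Px.
have [y yl rxy] := hl (key x) x Px erefl; exists y => //.
by apply/flatten_mapP; exists (key x); rewrite ?mem_enum.
Qed.

Lemma uniform_small (R : realDomainType) (I : finType) (P : I -> R -> Prop) :
  (forall i, exists2 s, 0 < s & forall t, 0 <= t <= s -> P i t) ->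
  exists2 s, 0 < s & forall t, 0 <= t <= s -> forall i, P i t.
Proof.
case/fin_all_exists2 => s s_gt0 sP.
exists (\big[Order.min/1]_i s i); first by apply/bigmin_gtP.
move=> t /andP[t_ge0 t_le] i; apply: sP.
by rewrite t_ge0 (le_trans t_le) // bigmin_le.
Qed.

Lemma sgr_subMr_conform (R : realDomainType) (a b t : R) :
  Num.sg a = Num.sg b -> 0 <= t -> t * `|b| <= `|a| ->
  Num.sg (a - t * b) = 0 \/ Num.sg (a - t * b) = Num.sg a.
Proof.
move=> sgab t_ge0 tba.
have -> : a - t * b = Num.sg a * (`|a| - t * `|b|).
  by rewrite {1}(numEsg a) {1}(numEsg b) -sgab; ring.
rewrite sgrM; have [->|] := eqVneq (`|a| - t * `|b|) 0; first by left; rewrite sgr0 mulr0.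
move=> nz; right; have pos : 0 < `|a| - t * `|b| by rewrite lt0r nz subr_ge0.
by rewrite sgr_id (gtr0_sg pos) mulr1.
Qed.

Lemma sgr_subMr_small (R : realFieldType) (a b : R) :
  Num.sg a = Num.sg b -> exists2 s, 0 < s & forall t, 0 <= t <= s ->
    Num.sg (a - t * b) = 0 \/ Num.sg (a - t * b) = Num.sg a.
Proof.
move=> sgab; have [b0|b0] := eqVneq b 0.
  have a0 : a = 0 by apply/eqP; rewrite -sgr_eq0 sgab b0 sgr0.
  by exists 1 => // t _; left; rewrite a0 b0 mulr0 subr0 sgr0.
have a0 : a != 0 by rewrite -sgr_eq0 sgab sgr_eq0.
exists (`|a| / `|b|); first by rewrite divr_gt0 ?normr_gt0.
move=> t /andP[t_ge0 t_le]; apply: sgr_subMr_conform => //.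
by rewrite -ler_pdivlMr ?normr_gt0.
Qed.

Section ConformalDecomposition.
Variables (R : realType) (m r : nat) (A : 'M[R]_(m, r)).

Definition sign_pattern (n : nat) (v : 'cV[R]_n) : {ffun 'I_n -> bool * bool} :=
  [ffun i => (0 < v i ord0, v i ord0 < 0)].

Lemma sign_pattern_sgr (n : nat) (u v : 'cV[R]_n) :
  sign_pattern u = sign_pattern v -> forall i, Num.sg (u i ord0) = Num.sg (v i ord0).
Proof.
move=> /ffunP uv i; move: (uv i); rewrite !ffunE => -[pos neg].
by rewrite !sgr_def !neq_lt pos neg.
Qed.

Lemma sign_le_subZ_small (n : nat) (u v : 'cV[R]_n) :
  (forall i, Num.sg (u i ord0) = Num.sg (v i ord0)) ->
  exists2 s, 0 < s & forall t, 0 <= t <= s -> sign_le (u - t *: v) u.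
Proof.
move=> sguv; have [s s_gt0 hs] := uniform_small (fun i => sgr_subMr_small (sguv i)).
by exists s => // t ht i; rewrite !mxE; apply: hs.
Qed.

Lemma sign_le_scale (n : nat) (u v : 'cV[R]_n) (t : R) : 0 < t ->
  (forall i, Num.sg (u i ord0) = Num.sg (v i ord0)) -> sign_le (t *: v) u.
Proof. by move=> t_gt0 sguv i; right; rewrite mxE sgrM gtr0_sg // mul1r sguv. Qed.

Lemma in_cone_of_sign_le (x z : 'cV[R]_r) :
  in_cone A x -> sign_le (A *m z) (A *m x) -> in_cone A z.
Proof.
move=> Cx sgz j; rewrite -sgr_ge0.
by case: (sgz j) => ->; rewrite ?sgr_ge0 ?Cx.
Qed.

Lemma in_cone_scale (x : 'cV[R]_r) (t : R) :
  0 <= t -> in_cone A x -> in_cone A (t *: x).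
Proof. by move=> t_ge0 Cx j; rewrite -scalemxAr mxE mulr_ge0. Qed.

Lemma conf_nondec_split_parallel (x y : 'cV[R]_r) :
  conf_nondec A x -> in_cone A y -> y <> 0 -> sign_le y x ->
  in_cone A (x - y) -> sign_le (x - y) x ->
  exists lambda : R, 0 < lambda /\ x = lambda *: y.
Proof.
move=> [_ [_ ndx]] Cy y0 sgy Cxy sgxy.
have [xy0|xy0] := eqVneq (x - y) 0.
  by exists 1; split; rewrite ?ltr01 // scale1r; apply/eqP; rewrite -subr_eq0 xy0.
have [l [l_gt0 xyl]] := ndx _ _ Cxy Cy (elimN eqP xy0) y0 sgxy sgy (esym (subrK y x)).
exists (l + 1); split; first by rewrite ltr_pwDl.
by rewrite scalerDl scale1r -xyl subrK.
Qed.

Lemma conf_nondec_parallel (x y : 'cV[R]_r) :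
  conf_nondec A x -> conf_nondec A y ->
  sign_pattern x = sign_pattern y -> sign_pattern (A *m x) = sign_pattern (A *m y) ->
  exists lambda : R, 0 < lambda /\ x = lambda *: y.
Proof.
move=> ndx [Cy [y0 _]] /sign_pattern_sgr sgxy /sign_pattern_sgr sgAxy.
have [s1 s1_gt0 small1] := sign_le_subZ_small sgxy.
have [s2 s2_gt0 small2] := sign_le_subZ_small sgAxy.
pose t := Order.min s1 s2.
have t_gt0 : 0 < t by rewrite lt_min s1_gt0.
have ts1 : 0 <= t <= s1 by rewrite ltW //= ge_min lexx.
have ts2 : 0 <= t <= s2 by rewrite ltW //= ge_min lexx orbT.
have ty0 : t *: y <> 0.
  by move/eqP; rewrite scaler_eq0 (gt_eqF t_gt0); apply/negP/eqP.
have Cxty : in_cone A (x - t *: y).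
  by apply: (in_cone_of_sign_le ndx.1); rewrite mulmxBr -scalemxAr; apply: small2.
have [l [l_gt0 ->]] := conf_nondec_split_parallel ndx (in_cone_scale (ltW t_gt0) Cy)
  ty0 (sign_le_scale t_gt0 sgxy) Cxty (small1 t ts1).
by exists (l * t); split; rewrite ?mulr_gt0 // scalerA.
Qed.

End ConformalDecomposition.

Theorem proposition3 (R : realType) (m r : nat) (A : 'M[R]_(m, r)) :
  exists s : seq 'cV[R]_r,
    forall x : 'cV[R]_r, conf_nondec A x ->
      exists2 y, y \in s & exists lambda : R, 0 < lambda /\ x = lambda *: y.
Proof.
apply: (@exists_transversal_of_finite_key _ _ (conf_nondec A)
  (fun x => (sign_pattern x, sign_pattern (A *m x)))) => x y ndx ndy [].
exact: conf_nondec_parallel.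
Qed.
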